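(* If $\mathcal{C}$ is a hypergraph with $\psi(\mathcal{C})=1$, then $\mathbb{S}^0$ is not contractible in $\operatorname{Ind}(\mathcal{C})$; that is, $\operatorname{Ind}(\mathcal{C})$ is nonempty but not path-connected.
   Context: A hypergraph $\mathcal{C}$ on a finite vertex set $V$ is a family of pairwise incomparable subsets of $V$ (its edges), each of cardinality at least $2$; vertices lying in no edge are allowed. The independence complex $\operatorname{Ind}(\mathcal{C})$ is the simplicial complex on $V$ whose faces are the subsets of $V$ containing no edge of $\mathcal{C}$. For an edge $F$: $\mathcal{C}-F$ is the hypergraph on $V$ with edge set $\mathcal{C}\setminus\{F\}$; $N_{\mathcal{C}}(F)=\bigcup\{E\setminus F : E\in\mathcal{C},\ |E\setminus F|=1\}$; and $\mathcal{C}:F$ is the hypergraph on $V\setminus(F\cup N_{\mathcal{C}}(F))$ whose edges are the members of cardinality at least $2$ among the inclusion-minimal members of the family $\{E\setminus F : E\in \mathcal{C}-F\}$. The number $\psi(\mathcal{C})\in\mathbb{Z}_{\ge 0}\cup\{\infty\}$ is defined recursively: $\psi(\mathcal{C})=0$ if $V=\emptyset$; $\psi(\mathcal{C})=\infty$ if $V\neq\emptyset$ and $\mathcal{C}$ has no edges; otherwise $\psi(\mathcal{C})=\max_{F\in\mathcal{C}}\min\{\psi(\mathcal{C}-F),\ \psi(\mathcal{C}:F)+|F|-1\}$. *)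

From mathcomp Require Import all_boot.
Set Implicit Arguments. Unset Strict Implicit. Unset Printing Implicit Defensive.

Definition is_hypergraph (T : finType) (V : {set T}) (C : {set {set T}}) : bool :=
  [forall E in C, (E \subset V) && (2 <= #|E|)] &&
  [forall E in C, forall E' in C, (E \subset E') ==> (E == E')].

(* Z_{>=0} u {oo}: [Some n] is n, [None] is oo. *)
Notation extnat := (option nat).

Definition emin (a b : extnat) : extnat :=
  match a, b with
  | None, x => x
  | x, None => x
  | Some m, Some n => Some (minn m n)
  end.

Definition emax (a b : extnat) : extnat :=
  match a, b with
  | None, _ => None
  | _, None => None
  | Some m, Some n => Some (maxn m n)
  end.

Definition eaddn (a : extnat) (k : nat) : extnat :=
  match a with None => None | Some m => Some (m + k) end.

Section Ops.
Variable T : finType.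

Definition nbhd (C : {set {set T}}) (F : {set T}) : {set T} :=
  \bigcup_(E in C | #|E :\: F| == 1) (E :\: F).

Definition colonV (V : {set T}) (C : {set {set T}}) (F : {set T}) : {set T} :=
  V :\: (F :|: nbhd C F).

Definition colonC (C : {set {set T}}) (F : {set T}) : {set {set T}} :=
  let D := [set E :\: F | E in C :\ F] in
  [set X in D | [forall Y in D, (Y \subset X) ==> (Y == X)] && (2 <= #|X|)].

(* psi with fuel; the number of edges strictly decreases in both recursive
   calls, so fuel #|C|.+1 suffices. *)
Fixpoint psi_fuel (n : nat) (V : {set T}) (C : {set {set T}}) : extnat :=
  match n with
  | 0 => None
  | n'.+1 =>
    if V == set0 then Some 0
    else if C == set0 then None
    else \big[emax/Some 0]_(F in C)
           emin (psi_fuel n' V (C :\ F))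
                (eaddn (psi_fuel n' (colonV V C F) (colonC C F)) (#|F| - 1))
  end.

Definition psi (V : {set T}) (C : {set {set T}}) : extnat :=
  psi_fuel #|C|.+1 V C.

Definition ind_face (V : {set T}) (C : {set {set T}}) (S : {set T}) : bool :=
  (S \subset V) && [forall E in C, ~~ (E \subset S)].

Definition ind_adj (V : {set T}) (C : {set {set T}}) : rel T :=
  fun x y => ind_face V C [set x; y].

Definition ind_nonempty (V : {set T}) (C : {set {set T}}) : Prop :=
  exists x, ind_face V C [set x].

(* Ind(C) (path-)connected: any two vertices are joined by an edge path in
   its 1-skeleton (equivalent to path-connectedness of the geometric
   realization). *)
Definition ind_connected (V : {set T}) (C : {set {set T}}) : Prop :=
  forall x y, ind_face V C [set x] -> ind_face V C [set y] ->
    connect (ind_adj V C) x y.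

End Ops.

(* Every edge has at least two vertices, so each branch of the recursion for
   psi adds |F| - 1 >= 1 and psi >= 1 once V is nonempty.  If moreover Ind(C)
   is connected then psi >= 2.  Branches through edges with three or more
   vertices give at least 2 outright, and deleting an edge keeps Ind(C)
   connected.  For a 2-edge {u, v}, walk from u to v in the 1-skeleton: the
   first vertex x2 not adjacent to u follows a vertex x1 adjacent to both, so
   {u, x2} is an edge, and since edges are pairwise incomparable x1 survives in
   C:{u, x2}; that branch gives psi(C:{u, x2}) + 1 >= 2. *)

From mathcomp Require Import all_boot.
Set Implicit Arguments. Unset Strict Implicit. Unset Printing Implicit Defensive.

Definition geqe (a : extnat) (k : nat) : bool :=
  if a is Some m then k <= m else true.

Lemma geqe_le a j k : j <= k -> geqe a k -> geqe a j.
Proof. by case: a => //= m jk; apply: leq_trans. Qed.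

Lemma geqe0 a : geqe a 0.
Proof. by case: a. Qed.

Lemma geqe_emin a b k : geqe a k -> geqe b k -> geqe (emin a b) k.
Proof. by case: a => [m|] //; case: b => [n|] //= ha hb; rewrite leq_min ha hb. Qed.

Lemma geqe_emaxl a b k : geqe a k -> geqe (emax a b) k.
Proof. by case: a => [m|] //; case: b => [n|] //= ha; rewrite leq_max ha. Qed.

Lemma geqe_emaxr a b k : geqe b k -> geqe (emax a b) k.
Proof. by case: a => [m|] //; case: b => [n|] //= hb; rewrite leq_max hb orbT. Qed.

Lemma geqe_eaddn a j k : geqe a j -> geqe (eaddn a k) (j + k).
Proof. by case: a => //= m; rewrite leq_add2r. Qed.

Lemma geqe_bigmax (I : eqType) (r : seq I) (P : pred I) (f : I -> extnat) x k :
  x \in r -> P x -> geqe (f x) k -> geqe (\big[emax/Some 0]_(i <- r | P i) f i) k.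
Proof.
elim: r => [|y r IH] //; rewrite in_cons big_cons => /orP[/eqP <- | xr] Px hx.
  by rewrite Px geqe_emaxl.
by case: (P y); rewrite ?geqe_emaxr ?IH.
Qed.

Lemma connect_nontransitive (T : finType) (e : rel T) u v :
  connect e u v -> u != v -> ~~ e u v ->
  exists x1 x2, [/\ e u x1, e x1 x2 & ~~ e u x2].
Proof.
have walk y p : e u y -> path e y p -> ~~ e u (last y p) ->
    exists x1 x2, [/\ e u x1, e x1 x2 & ~~ e u x2].
  elim: p y => [|z p IH] y /= uy; first by rewrite uy.
  case/andP=> yz pz; case: (boolP (e u z)) => [uz | nuz _]; first exact: IH.
  by exists y, z.
case/connectP=> -[|y p] /= pth ->; first by rewrite eqxx.
by case/andP: pth => uy pth _; exact: walk.
Qed.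

Section IndependenceComplex.
Variable T : finType.
Implicit Types (V : {set T}) (C : {set {set T}}) (E F G : {set T}).

Lemma hypergraph_edge_card V C E : is_hypergraph V C -> E \in C -> 2 <= #|E|.
Proof. by case/andP=> /forall_inP/(_ E) h _ /h/andP[]. Qed.

Lemma hypergraph_edge_sub V C E : is_hypergraph V C -> E \in C -> E \subset V.
Proof. by case/andP=> /forall_inP/(_ E) h _ /h/andP[]. Qed.

Lemma hypergraph_antichain V C E E' :
  is_hypergraph V C -> E \in C -> E' \in C -> E \subset E' -> E = E'.
Proof. by case/andP=> _ /forall_inP h /h/forall_inP h' /h'/implyP h'' /h''/eqP. Qed.

Lemma is_hypergraphD1 V C G : is_hypergraph V C -> is_hypergraph V (C :\ G).
Proof.
move=> hC; apply/andP; split; apply/forall_inP => E /setD1P[_ EC].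
  by rewrite (hypergraph_edge_sub hC EC) (hypergraph_edge_card hC EC).
apply/forall_inP => E' /setD1P[_ E'C]; apply/implyP => EE'.
by rewrite (hypergraph_antichain hC EC E'C EE').
Qed.

Lemma ind_face_edge V C S E : ind_face V C S -> E \in C -> ~~ (E \subset S).
Proof. by case/andP=> _ /forall_inP; apply. Qed.

Lemma ind_face1 V C x : {in C, forall E, 2 <= #|E|} -> ind_face V C [set x] = (x \in V).
Proof.
move=> hcard; rewrite /ind_face sub1set andb_idr // => _.
apply/forall_inP => E EC; apply: contraTN (hcard E EC) => /subset_leq_card.
by rewrite cards1 -ltnS ltnNge => ->.
Qed.

Lemma ind_faceD1 V C G S : ind_face V C S -> ind_face V (C :\ G) S.
Proof.
move=> hS; apply/andP; split; first by case/andP: hS.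
by apply/forall_inP => E /setD1P[_ EC]; exact: ind_face_edge hS EC.
Qed.

Lemma ind_adj_mem V C x y : ind_adj V C x y -> (x \in V) && (y \in V).
Proof. by case/andP=> /subsetP sV _; rewrite !sV ?set21 ?set22. Qed.

Lemma ind_connectedD1 V C G :
  is_hypergraph V C -> ind_connected V C -> ind_connected V (C :\ G).
Proof.
move=> hC hconn x y; have hcard := hypergraph_edge_card hC.
have hcardD := hypergraph_edge_card (is_hypergraphD1 G hC).
rewrite !ind_face1 // => xV yV.
have := hconn x y; rewrite !ind_face1 // => /(_ xV yV).
by apply: connect_sub => a b ab; apply: connect1; exact: ind_faceD1.
Qed.

(* The edge inside [set x; y] must be all of it, as edges have two vertices. *)
Lemma nonadj_edge V C x y :
  is_hypergraph V C -> x \in V -> y \in V -> ~~ ind_adj V C x y -> [set x; y] \in C.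
Proof.
move=> hC xV yV; rewrite /ind_adj /ind_face subUset !sub1set xV yV /=.
case/forall_inPn=> E EC /negbNE Exy.
suff -> : [set x; y] = E by [].
apply/eqP; rewrite eq_sym eqEcard Exy (leq_trans _ (hypergraph_edge_card hC EC)) //.
by rewrite cards2; case: (x != y).
Qed.

Lemma common_neighbour_notin_nbhd V C x0 x1 x2 :
  is_hypergraph V C -> [set x0; x2] \in C ->
  ind_adj V C x0 x1 -> ind_adj V C x1 x2 -> x1 \notin nbhd C [set x0; x2].
Proof.
move=> hC EC a01 a12; apply/bigcupP => -[G /andP[GC /eqP G1] x1G].
have GE : G :\: [set x0; x2] = [set x1].
  by apply/eqP; rewrite eq_sym eqEcard sub1set x1G cards1 G1.
have Gin z : z \in G -> [|| z == x0, z == x1 | z == x2].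
  move=> zG; case: (boolP (z \in [set x0; x2])) => [/set2P[]-> | zE].
  - by rewrite eqxx.
  - by rewrite eqxx !orbT.
  have : z \in G :\: [set x0; x2] by rewrite inE zE.
  by rewrite GE inE => ->; rewrite orbT.
have G01 : x2 \notin G -> G \subset [set x0; x1].
  move=> x2G; apply/subsetP => z zG; rewrite !inE.
  case/or3P: (Gin z zG) => [->|->|/eqP zx2] //; first by rewrite orbT.
  by rewrite -zx2 zG in x2G.
have G12 : x0 \notin G -> G \subset [set x1; x2].
  move=> x0G; apply/subsetP => z zG; rewrite !inE.
  case/or3P: (Gin z zG) => [/eqP zx0|->|->] //; last by rewrite orbT.
  by rewrite -zx0 zG in x0G.
case: (boolP (x0 \in G)) => x0G; last by have := ind_face_edge a12 GC; rewrite G12.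
case: (boolP (x2 \in G)) => x2G; last by have := ind_face_edge a01 GC; rewrite G01.
have EG : [set x0; x2] \subset G by rewrite subUset !sub1set x0G x2G.
by move: x1G; rewrite -(hypergraph_antichain hC EC GC EG) setDv inE.
Qed.

Lemma common_neighbour_colonV V C x0 x1 x2 :
  is_hypergraph V C -> [set x0; x2] \in C ->
  ind_adj V C x0 x1 -> ind_adj V C x1 x2 -> x1 \in colonV V C [set x0; x2].
Proof.
move=> hC EC a01 a12; have /andP[_ x1V] := ind_adj_mem a01.
have nadj : ~~ ind_adj V C x0 x2.
  by apply/negP => /ind_face_edge/(_ EC); rewrite subxx.
have x10 : x1 != x0 by apply: contraNneq nadj => e; rewrite -e.
have x12 : x1 != x2 by apply: contraNneq nadj => e; rewrite -e.
rewrite /colonV !inE negb_or x1V (negbTE x10) (negbTE x12).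
by rewrite (common_neighbour_notin_nbhd hC).
Qed.

Lemma card_colonC_lt C F : F \in C -> #|colonC C F| < #|C|.
Proof.
move=> FC; rewrite (cardsD1 F C) FC ltnS.
apply: leq_trans (leq_imset_card (fun E => E :\: F) (C :\ F)).
by apply: subset_leq_card; apply/subsetP => X; rewrite inE => /andP[].
Qed.

Lemma colonC_edge_card C F : {in colonC C F, forall E, 2 <= #|E|}.
Proof. by move=> E; rewrite inE => /and3P[]. Qed.

Lemma psi_fuelS_geqe n V C F k :
  V != set0 -> F \in C ->
  geqe (psi_fuel n V (C :\ F)) k ->
  geqe (eaddn (psi_fuel n (colonV V C F) (colonC C F)) (#|F| - 1)) k ->
  geqe (psi_fuel n.+1 V C) k.
Proof.
move=> V0 FC hdel hcolon; rewrite /= (negbTE V0).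
case: eqP => [C0 | _]; first by rewrite C0 inE in FC.
by apply: (geqe_bigmax (mem_index_enum F)) => //; rewrite geqe_emin.
Qed.

Lemma psi_fuel_geqe1 n V C :
  #|C| < n -> {in C, forall E, 2 <= #|E|} -> V != set0 -> geqe (psi_fuel n V C) 1.
Proof.
elim: n V C => [|n IH] V C // hn hcard V0.
have [C0 | [F FC]] := set_0Vmem C; first by rewrite /= (negbTE V0) C0 eqxx.
apply: (psi_fuelS_geqe V0 FC).
  apply: IH => //; first exact: leq_trans (proper_card (properD1 FC)) _.
  by move=> E /setD1P[_]; exact: hcard.
by apply: geqe_le (geqe_eaddn _ (geqe0 _)); rewrite add0n subn_gt0 hcard.
Qed.

Lemma connected_edge_large_or_colonV V C :
  is_hypergraph V C -> ind_connected V C -> C != set0 ->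
  exists2 E, E \in C & (2 < #|E|) || (colonV V C E != set0).
Proof.
move=> hC hconn /set0Pn[F FC]; have hcard := hypergraph_edge_card hC.
case: (ltnP 2 #|F|) => F3; first by exists F; rewrite ?F3.
have /cards2P[u [v [uv Fuv]]] : #|F| == 2 by rewrite eqn_leq F3 hcard.
have /subsetP FV := hypergraph_edge_sub hC FC.
have uV : u \in V by rewrite FV // Fuv set21.
have vV : v \in V by rewrite FV // Fuv set22.
have nuv : ~~ ind_adj V C u v.
  by apply/negP => /ind_face_edge/(_ FC); rewrite Fuv subxx.
have uv_conn : connect (ind_adj V C) u v by apply: hconn; rewrite ind_face1.
have [x1 [x2 [a01 a12 n02]]] := connect_nontransitive uv_conn uv nuv.
have /andP[_ x2V] := ind_adj_mem a12.
have EC := nonadj_edge hC uV x2V n02.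
exists [set u; x2] => //; apply/orP; right; apply/set0Pn; exists x1.
exact: common_neighbour_colonV.
Qed.

Lemma psi_fuel_geqe2 n V C :
  #|C| < n -> is_hypergraph V C -> V != set0 -> ind_connected V C ->
  geqe (psi_fuel n V C) 2.
Proof.
elim: n V C => [|n IH] V C // hn hC V0 hconn.
have [C0 | C0] := eqVneq C set0; first by rewrite /= (negbTE V0) C0 eqxx.
have [E EC hE] := connected_edge_large_or_colonV hC hconn C0.
have hcard := hypergraph_edge_card hC.
apply: (psi_fuelS_geqe V0 EC).
  apply: IH => //; first exact: leq_trans (proper_card (properD1 EC)) _.
    exact: is_hypergraphD1.
  exact: ind_connectedD1.
case/orP: hE => [E3 | colon0].
  by apply: geqe_le (geqe_eaddn _ (geqe0 _)); rewrite add0n ltn_subRL.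
have h1 := psi_fuel_geqe1 (leq_trans (card_colonC_lt EC) hn)
  (@colonC_edge_card C E) colon0.
by apply: geqe_le (geqe_eaddn _ h1); rewrite add1n ltnS subn_gt0 hcard.
Qed.

End IndependenceComplex.

Theorem lemma3p6 (T : finType) (V : {set T}) (C : {set {set T}}) :
  is_hypergraph V C -> psi V C = Some 1 ->
  ind_nonempty V C /\ ~ ind_connected V C.
Proof.
move=> hC hpsi; have hcard := hypergraph_edge_card hC.
have V0 : V != set0 by apply/eqP => V0; move: hpsi; rewrite /psi /= V0 eqxx.
split; first by case/set0Pn: V0 => x xV; exists x; rewrite ind_face1.
move=> hconn; have := psi_fuel_geqe2 (ltnSn #|C|) hC V0 hconn.
by rewrite -/(psi V C) hpsi.
Qed.
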